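(* Let $n\geq 1$. If ${\bf f}[n]=a$, then every valid representation $[k_m\cdots k_0]_F$ of $n$ ends with an even number of $0$s (i.e. the number of trailing zero digits is even). If ${\bf f}[n]=b$, then every valid representation of $n$ ends with an odd number of $0$s.
   Context: Fibonacci numbers: $F_0=0$, $F_1=1$, $F_{m+2}=F_{m+1}+F_m$. Standard Fibonacci words over $\{a,b\}$: $f_{-1}=b$, $f_0=a$, $f_{m+1}=f_mf_{m-1}$ for $m\geq 0$ (so $|f_m|=F_{m+2}$). The Fibonacci infinite word is ${\bf f}=\lim_{m\to\infty} f_m=abaababaab\cdots$, indexed from ${\bf f}[1]=a$; ${\bf f}(0..j]$ denotes its prefix of length $j$. For nonnegative integers $k_m,\dots,k_0$, the notation $[k_m\cdots k_0]_F$ denotes the integer $\sum_{i=0}^m k_iF_{i+2}$. A representation $N=[k_m\cdots k_0]_F$ with all $k_i\geq 0$ is called valid if ${\bf f}(0..N]=f_m^{k_m}f_{m-1}^{k_{m-1}}\cdots f_0^{k_0}$ (concatenation, $u^k$ meaning $k$ copies of $u$). *)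

From HB Require Import structures.
From mathcomp Require Import all_boot.
Set Implicit Arguments. Unset Strict Implicit. Unset Printing Implicit Defensive.

Inductive letter := la | lb.
Definition letter_eqb (x y : letter) : bool :=
  match x, y with la, la | lb, lb => true | _, _ => false end.
Lemma letter_eqP : Equality.axiom letter_eqb.
Proof. by case; case; constructor. Qed.
HB.instance Definition _ := hasDecEq.Build letter letter_eqP.

Fixpoint fib (n : nat) : nat :=
  match n with
  | 0 => 0
  | 1 => 1
  | (m.+1 as p).+1 => fib p + fib m
  end.

(* fwS j = f_{j-1}:  fwS 0 = f_{-1} = b, fwS 1 = f_0 = a,
   fwS (j+2) = fwS (j+1) ++ fwS j, i.e. f_{m+1} = f_m f_{m-1}. *)
Fixpoint fwS (j : nat) : seq letter :=
  match j with
  | 0 => [:: lb]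
  | 1 => [:: la]
  | (p.+1 as q).+1 => fwS q ++ fwS p
  end.

Definition fw (m : nat) : seq letter := fwS m.+1.

(* The infinite Fibonacci word, indexed from 1: f[i] is the i-th letter.
   Since each f_m is a prefix of f_{m+1} and |f_i| = F_{i+2} >= i+1,
   the i-th letter of the limit is the i-th letter of f_i. *)
Definition fibinf (i : nat) : letter := nth la (fw i) i.-1.

Definition fibpref (j : nat) : seq letter := take j (fw j).

(* A representation [k_m ... k_0]_F is given by m and the digit function k
   (only k 0, ..., k m matter). *)
Definition repval (m : nat) (k : nat -> nat) : nat :=
  \sum_(0 <= i < m.+1) k i * fib i.+2.

Definition repword (m : nat) (k : nat -> nat) : seq letter :=
  flatten [seq flatten (nseq (k i) (fw i)) | i <- rev (iota 0 m.+1)].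

Definition valid_rep (N m : nat) (k : nat -> nat) : Prop :=
  N = repval m k /\ fibpref N = repword m k.

(* Number of trailing zero digits: index of the first nonzero among
   k_0, k_1, ..., k_m (m+1 if all digits are 0). *)
Definition trailing_zeros (m : nat) (k : nat -> nat) : nat :=
  find (fun i => k i != 0) (iota 0 m.+1).

(** The last letter of [f_j] is [a] for even [j] and [b] for odd [j], since
    [f_{j+2} = f_{j+1} f_j] ends like [f_j].  In a valid representation of [n]
    the word [f_m^{k_m} ... f_0^{k_0}] is the prefix of length [n] of the
    Fibonacci word, so its last letter is [f[n]]; the factors [f_i^{k_i}] with
    [i] below the number [t] of trailing zeros are empty, so this word ends with
    [f_t], whose last letter is determined by the parity of [t]. *)

From mathcomp Require Import all_boot.

Lemma fib_gt0 n : 0 < fib n.+1.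
Proof. by elim: n => [|[|n] IHn] //=; rewrite addn_gt0 IHn. Qed.

Lemma ltn_fib n : n < fib n.+2.
Proof.
elim: n => [|n IHn] //; rewrite [fib _]/= -addn1.
exact: leq_add IHn (fib_gt0 n).
Qed.

Lemma fw_rec m : fw m.+2 = fw m.+1 ++ fw m.
Proof. by []. Qed.

Lemma size_fw m : size (fw m) = fib m.+2.
Proof. by elim/ltn_ind: m => -[|[|m]] // IHm; rewrite fw_rec size_cat !IHm. Qed.

Lemma size_fw_gt0 m : 0 < size (fw m).
Proof. by rewrite size_fw fib_gt0. Qed.

Lemma last_fw m x : last x (fw m) = if odd m then lb else la.
Proof. by elim/ltn_ind: m x => -[|[|m]] // IHm x; rewrite fw_rec last_cat IHm //= negbK. Qed.

Lemma last_flatten_nseq (T : Type) (s : seq T) c x : 0 < size s -> 0 < c ->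
  last x (flatten (nseq c s)) = last x s.
Proof.
case: s => // y s _; elim: c x => [|[|c] IHc] x //= _.
  by rewrite cats0.
by rewrite last_cat IHc.
Qed.

Lemma last_fibpref n x : 0 < n -> last x (fibpref n) = fibinf n.
Proof.
move=> n_gt0; have le_n_fw : n <= size (fw n) by rewrite size_fw ltnW ?ltn_fib.
rewrite -nth_last /fibpref size_takel // nth_take ?prednK //.
by rewrite /fibinf (set_nth_default la) // prednK.
Qed.

Lemma repval_eq0 m k : ~~ has (fun i => k i != 0) (iota 0 m.+1) -> repval m k = 0.
Proof.
move=> /hasPn k0; rewrite /repval big_seq big1 // => i /k0.
by rewrite negbK => /eqP ->.
Qed.

Lemma last_repword m k x : has (fun i => k i != 0) (iota 0 m.+1) ->
  last x (repword m k) = if odd (trailing_zeros m k) then lb else la.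
Proof.
rewrite /trailing_zeros; set t := find _ _ => has_k.
have lt_t_m : t < m.+1 by rewrite -[m.+1](size_iota 0) -has_find.
have kt_gt0 : 0 < k t.
  by have := nth_find 0 has_k; rewrite nth_iota // lt0n.
have low_k0 i : i \in iota 0 t -> k i = 0.
  rewrite mem_iota add0n => /= lt_i_t; apply/eqP/negbFE.
  by have := before_find 0 lt_i_t; rewrite nth_iota // (ltn_trans lt_i_t).
have iota_split : iota 0 m.+1 = iota 0 t ++ t :: iota t.+1 (m - t).
  by rewrite -[m.+1](subnKC (ltnW lt_t_m)) iotaD subSn.
have low_nil : flatten [seq flatten (nseq (k i) (fw i)) | i <- rev (iota 0 t)] = [::].
  rewrite (eq_in_map _ (fun=> [::]) _).1 => [|i]; last by rewrite mem_rev => /low_k0 ->.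
  by elim: (rev _).
rewrite /repword iota_split rev_pivot map_cat map_cons /= flatten_cat /= low_nil cats0.
by rewrite last_cat last_flatten_nseq ?size_fw_gt0 // last_fw.
Qed.

Lemma fibinf_valid_rep n : 0 < n -> forall m k, valid_rep n m k ->
  fibinf n = if odd (trailing_zeros m k) then lb else la.
Proof.
move=> n_gt0 m k [n_val prefix_n].
have has_k : has (fun i => k i != 0) (iota 0 m.+1).
  by apply: contraTT n_gt0 => /repval_eq0; rewrite -n_val => ->.
by rewrite -(last_fibpref _ la n_gt0) prefix_n last_repword.
Qed.

Theorem proposition1 (n : nat) : 1 <= n ->
  (fibinf n = la ->
     forall (m : nat) (k : nat -> nat), valid_rep n m k -> ~~ odd (trailing_zeros m k)) /\
  (fibinf n = lb ->
     forall (m : nat) (k : nat -> nat), valid_rep n m k -> odd (trailing_zeros m k)).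
Proof.
by move=> n_gt0; split=> fn m k /(fibinf_valid_rep _ n_gt0); rewrite fn; case: odd.
Qed.
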